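(* Consider an elementary cube of $\mathbb Z^3$ with black base vertex $n$ and black fields $x=x(n)$, $x_{12},x_{23},x_{31}$ (at $n+e_1+e_2$, $n+e_2+e_3$, $n+e_3+e_1$). For each cyclic permutation $(i,j,k)$ of $(1,2,3)$ let $a^{ij},b^{ij},c^{ij},a^{ij}_k,b^{ij}_k,c^{ij}_k$ be nonzero complex numbers with $$b^{ij}c^{ij}=(a^{ij})^2,\qquad b^{ij}_kc^{ij}_k=(a^{ij}_k)^2,$$ and $b^{12}+b^{23}+b^{31}\neq0$. Let $$S^{123}=\sum_{(i,j,k)}\Big(\tfrac12(b^{ij}_kx_{jk}^2+c^{ij}_kx_{ki}^2)-a^{ij}_kx_{jk}x_{ki}-\tfrac12(b^{ij}x^2+c^{ij}x_{ij}^2)+a^{ij}xx_{ij}\Big),$$ summed over the three cyclic permutations. Then the four linear corner equations $\partial S^{123}/\partial x=0$, $\partial S^{123}/\partial x_{12}=0$, $\partial S^{123}/\partial x_{23}=0$, $\partial S^{123}/\partial x_{31}=0$ have rank 1 (are all proportional) if and only if $$a^{12}_3=\frac{a^{23}a^{31}}{\Sigma},\ a^{23}_1=\frac{a^{31}a^{12}}{\Sigma},\ a^{31}_2=\frac{a^{12}a^{23}}{\Sigma},$$ $$b^{12}_3=\frac{c^{23}b^{31}}{\Sigma},\ b^{23}_1=\frac{c^{31}b^{12}}{\Sigma},\ b^{31}_2=\frac{c^{12}b^{23}}{\Sigma},\qquad c^{12}_3=\frac{b^{23}c^{31}}{\Sigma},\ c^{23}_1=\frac{b^{31}c^{12}}{\Sigma},\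 c^{31}_2=\frac{b^{12}c^{23}}{\Sigma},$$ where $\Sigma=b^{12}+b^{23}+b^{31}$.
   Context: $S^{123}$ is the action over the boundary of the cube of the discrete 2-form $\mathcal L(\sigma^{ij})=\frac12(b^{ij}x^2+c^{ij}x_{ij}^2)-a^{ij}xx_{ij}$ on the three plaquettes at $n$ and $\mathcal L(\sigma^{ij}_k)=\frac12(b^{ij}_kx_{jk}^2+c^{ij}_kx_{ki}^2)-a^{ij}_kx_{jk}x_{ki}$ on the opposite plaquettes (whose black vertices are $n+e_j+e_k$ and $n+e_k+e_i$); the conditions $bc=a^2$ say each of these quadratic forms is a complete square. Rank 1 of the corner system is the paper's notion of consistency (forming a pluri-Lagrangian system). *)

From HB Require Import structures.
From mathcomp Require Import all_boot all_order all_algebra.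
From mathcomp Require Import reals complex.
From mathcomp Require Import mpoly.
Set Implicit Arguments. Unset Strict Implicit. Unset Printing Implicit Defensive.
Import Order.TTheory GRing.Theory Num.Theory.
Local Open Scope ring_scope.

Definition vx  (F : fieldType) : {mpoly F[4]} := 'X_(inord 0).
Definition vx12 (F : fieldType) : {mpoly F[4]} := 'X_(inord 1).
Definition vx23 (F : fieldType) : {mpoly F[4]} := 'X_(inord 2).
Definition vx31 (F : fieldType) : {mpoly F[4]} := 'X_(inord 3).

Definition plaq (F : fieldType) (a b c : F) (u v : {mpoly F[4]}) : {mpoly F[4]} :=
  (2%:R)^-1 *: (b *: u ^+ 2 + c *: v ^+ 2) - a *: (u * v).

Definition S123 (F : fieldType)
  (a12 a23 a31 b12 b23 b31 c12 c23 c31 : F)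
  (a12_3 a23_1 a31_2 b12_3 b23_1 b31_2 c12_3 c23_1 c31_2 : F) : {mpoly F[4]} :=
    (plaq a12_3 b12_3 c12_3 (vx23 F) (vx31 F) - plaq a12 b12 c12 (vx F) (vx12 F))
  + (plaq a23_1 b23_1 c23_1 (vx31 F) (vx12 F) - plaq a23 b23 c23 (vx F) (vx23 F))
  + (plaq a31_2 b31_2 c31_2 (vx12 F) (vx23 F) - plaq a31 b31 c31 (vx F) (vx31 F)).

(* Coefficient matrix of the system of corner equations dS/dx_r = 0
   (r = 0..3): row r lists the coefficients of the linear polynomial
   dS/dx_r on the variables x_0, ..., x_3. *)
Definition corner_matrix (F : fieldType) (S : {mpoly F[4]}) : 'M[F]_4 :=
  \matrix_(r < 4, s < 4) (mderiv r S)@_(U_(s))%MM.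

From HB Require Import structures.
From mathcomp Require Import all_boot all_order all_algebra.
From mathcomp Require Import reals complex.
From mathcomp Require Import mpoly.
From mathcomp Require Import ring.
Set Implicit Arguments. Unset Strict Implicit. Unset Printing Implicit Defensive.
Import Order.TTheory GRing.Theory Num.Theory.
Local Open Scope ring_scope.

(* The corner matrix is the Hessian of the quadratic form S^{123}; its entry at
   (x, x) is -Sigma, a nonzero pivot, so it has rank 1 iff the six 2x2 minors
   through that pivot vanish.  The three off-diagonal minors give the a's at
   once.  The three diagonal minors, together with b c = a^2 on every
   plaquette, prescribe for the six products Sigma b^{ij}_k, Sigma c^{ij}_k
   three pairwise sums and three cross products; eliminating, one unknown is a
   double root of a quadratic, which forces the unique solution. *)

Lemma mderiv_mpolyXU (n : nat) (R : nzRingType) (i r : 'I_n) :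
  mderiv r ('X_i : {mpoly R[n]}) = (i == r)%:R%:MP.
Proof.
rewrite mderivX mnm1E; case: eqP => [->|_]; last by rewrite scale0r.
by rewrite -{1}[U_(r)%MM]add0m addmK mpolyX0 scale1r.
Qed.

Lemma mcoeffU_mderivXX (n : nat) (R : comNzRingType) (i j r s : 'I_n) :
  (mderiv r ('X_i * 'X_j : {mpoly R[n]}))@_U_(s) =
  (i == r)%:R * (j == s)%:R + (j == r)%:R * (i == s)%:R.
Proof.
by rewrite mderivM !mderiv_mpolyXU mcoeffD [_ * _%:MP]mulrC !mul_mpolyC !mcoeffZ !mcoeffXU.
Qed.

Lemma mxrank_eq1P (F : fieldType) (n : nat) (A : 'M[F]_n.+1) :
  A ord0 ord0 != 0 ->
  \rank A = 1%N <-> forall i j, A i j * A ord0 ord0 = A i ord0 * A ord0 j.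
Proof.
move=> nz_A00; have row0_neq0 : row ord0 A != 0.
  by apply: contraNneq nz_A00 => /rowP/(_ ord0); rewrite !mxE => ->.
split=> [rkA1 i j | minor].
- have rk_row0 : \rank (row ord0 A) = 1%N by rewrite rank_rV row0_neq0.
  have A_sub_row0 : (A <= row ord0 A)%MS.
    by have [_ <-] := mxrank_leqif_sup (row_sub ord0 A); rewrite rkA1 rk_row0.
  have /sub_rVP [k rowiE] := submx_trans (row_sub i A) A_sub_row0.
  move/rowP: rowiE => rowiE; move: (rowiE j) (rowiE ord0).
  by rewrite !mxE => -> ->; ring.
- have AE : A = (A ord0 ord0)^-1 *: (col ord0 A *m row ord0 A).
    by apply/matrixP=> i j; rewrite !mxE big_ord1 !mxE -minor; field.
  apply/eqP; rewrite eqn_leq lt0n mxrank_eq0 andbC.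
  have -> : A != 0 by apply: contraNneq row0_neq0 => ->; rewrite row0.
  rewrite AE; apply: leq_trans (mxrank_scale _ _) _.
  exact: leq_trans (mxrankM_maxl _ _) (rank_leq_col _).
Qed.

Section SymmetricMatrix4.
Variable F : fieldType.

Definition symmx4 (d0 d1 d2 d3 e01 e02 e03 e12 e13 e23 : F) : 'M[F]_4 :=
  \matrix_(i < 4, j < 4)
    (nth [::] [:: [:: d0; e01; e02; e03]; [:: e01; d1; e12; e13];
                 [:: e02; e12; d2; e23]; [:: e03; e13; e23; d3]] i)`_j.

Lemma mxrank_symmx4_eq1P (d0 d1 d2 d3 e01 e02 e03 e12 e13 e23 : F) :
  d0 != 0 ->
  \rank (symmx4 d0 d1 d2 d3 e01 e02 e03 e12 e13 e23) = 1%N <->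
  [/\ d0 * d1 = e01 ^+ 2, d0 * d2 = e02 ^+ 2 & d0 * d3 = e03 ^+ 2] /\
  [/\ d0 * e12 = e01 * e02, d0 * e13 = e01 * e03 & d0 * e23 = e02 * e03].
Proof.
move=> nz_d0; rewrite mxrank_eq1P ?mxE //.
split=> [minor | [[m11 m22 m33] [m12 m13 m23]] i j].
- do 2!split; [move: (minor (inord 1) (inord 1)) | move: (minor (inord 2) (inord 2))
         | move: (minor (inord 3) (inord 3)) | move: (minor (inord 1) (inord 2))
         | move: (minor (inord 1) (inord 3)) | move: (minor (inord 2) (inord 3))];
  by rewrite !mxE !inordK //= mulrC => ->; rewrite ?expr2.
- case: i => [[|[|[|[|i]]]] //= ?]; case: j => [[|[|[|[|j]]]] //= ?];
  by rewrite !mxE /= mulrC ?m11 ?m22 ?m33 ?m12 ?m13 ?m23 ?expr2; ring.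
Qed.

End SymmetricMatrix4.

Section CornerMatrix.
Variable F : fieldType.
Hypothesis two_neq0 : (2 : F) != 0.

Local Notation "[ 'd' i , j ]" := ((i == j)%:R : F).

Lemma mcoeffU_mderiv_plaq (a b c : F) (i j r s : 'I_4) :
  (mderiv r (plaq a b c 'X_i 'X_j))@_U_(s) =
  b * [d i, r] * [d i, s] + c * [d j, r] * [d j, s]
  - a * ([d i, r] * [d j, s] + [d j, r] * [d i, s]).
Proof.
rewrite /plaq mderivB !mderivZ mderivD !mderivZ !expr2.
rewrite mcoeffB !mcoeffZ mcoeffD !mcoeffZ !mcoeffU_mderivXX.
by field.
Qed.

Lemma corner_matrix_S123
    (a12 a23 a31 b12 b23 b31 c12 c23 c31 : F)
    (a12_3 a23_1 a31_2 b12_3 b23_1 b31_2 c12_3 c23_1 c31_2 : F) :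
  corner_matrix (S123 a12 a23 a31 b12 b23 b31 c12 c23 c31
                      a12_3 a23_1 a31_2 b12_3 b23_1 b31_2 c12_3 c23_1 c31_2) =
  symmx4 (- (b12 + b23 + b31)) (- c12 + c23_1 + b31_2) (b12_3 - c23 + c31_2)
         (c12_3 + b23_1 - c31) a12 a23 a31 (- a31_2) (- a23_1) (- a12_3).
Proof.
have inordE k (i : 'I_4) : (k < 4)%N -> (inord k == i) = (k == i).
  by move=> lt_k4; rewrite -val_eqE /= inordK.
apply/matrixP => i j; rewrite !mxE /S123 [plaq]lock !mderivD !mderivN !mcoeffD !mcoeffN.
rewrite -lock /vx /vx12 /vx23 /vx31 !mcoeffU_mderiv_plaq !inordE //.
by case: i => [[|[|[|[|i]]]] //= ?]; case: j => [[|[|[|[|j]]]] //= ?]; ring.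
Qed.
End CornerMatrix.

Lemma sum_product_system_solution (F : fieldType) (B1 B2 B3 C1 C2 C3 p q r s v w : F) :
  B1 != 0 -> B2 != 0 -> B3 != 0 -> B1 + B2 + B3 != 0 ->
  C1 != 0 -> C2 != 0 -> C3 != 0 ->
  p + q = C1 * (B2 + B3) -> r + s = C3 * (B1 + B2) -> w + v = C2 * (B1 + B3) ->
  r * p = B1 * C1 * (B3 * C3) -> q * v = B1 * C1 * (B2 * C2) ->
  w * s = B2 * C2 * (B3 * C3) ->
  [/\ p = B3 * C1 /\ q = B2 * C1, r = B1 * C3 /\ s = B2 * C3
    & w = B3 * C2 /\ v = B1 * C2].
Proof.
move=> nz_B1 nz_B2 nz_B3 nz_B nz_C1 nz_C2 nz_C3 pq rs wv rp qv ws.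
have sp : s * p = C3 * (B1 + B2) * p - B1 * C1 * (B3 * C3) by rewrite -rp -rs; ring.
have wq : w * q = C2 * (B1 + B3) * q - B1 * C1 * (B2 * C2) by rewrite -qv -wv; ring.
have qE : q = C1 * (B2 + B3) - p by rewrite -pq; ring.
have double_root : (p - B3 * C1) ^+ 2 * (B1 * (B1 + B2 + B3) * C2 * C3) = 0.
  have E : (w * s) * (p * q) - (s * p) * (w * q) = 0 by ring.
  by rewrite -[RHS]E sp wq ws qE; ring.
have nz_K : B1 * (B1 + B2 + B3) * C2 * C3 != 0 by rewrite !mulf_neq0.
have pE : p = B3 * C1.
  by move/eqP: double_root; rewrite mulf_eq0 (negbTE nz_K) orbF expf_eq0 subr_eq0 => /eqP.
have {}qE : q = B2 * C1 by rewrite qE pE; ring.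
have nz_p : p != 0 by rewrite pE mulf_neq0.
have nz_q : q != 0 by rewrite qE mulf_neq0.
have rE : r = B1 * C3 by apply: (mulIf nz_p); rewrite rp pE; ring.
have vE : v = B1 * C2 by apply: (mulfI nz_q); rewrite qv qE; ring.
split; split=> //.
- by apply: (addrI r); rewrite rs rE; ring.
- by apply: (addIr v); rewrite wv vE; ring.
Qed.

Section CornerConsistency.
Variable F : fieldType.
Variables a12 a23 a31 b12 b23 b31 c12 c23 c31 : F.
Variables a12_3 a23_1 a31_2 b12_3 b23_1 b31_2 c12_3 c23_1 c31_2 : F.
Hypotheses (nz_b12 : b12 != 0) (nz_b23 : b23 != 0) (nz_b31 : b31 != 0).
Hypotheses (nz_c12 : c12 != 0) (nz_c23 : c23 != 0) (nz_c31 : c31 != 0).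
Hypothesis nz_Sg : b12 + b23 + b31 != 0.
Hypotheses (bc12 : b12 * c12 = a12 ^+ 2) (bc23 : b23 * c23 = a23 ^+ 2)
           (bc31 : b31 * c31 = a31 ^+ 2).
Local Notation Sg := (b12 + b23 + b31).

Lemma consistency_of_corner_minors :
  b12_3 * c12_3 = a12_3 ^+ 2 -> b23_1 * c23_1 = a23_1 ^+ 2 ->
  b31_2 * c31_2 = a31_2 ^+ 2 ->
  [/\ - Sg * (- c12 + c23_1 + b31_2) = a12 ^+ 2,
      - Sg * (b12_3 - c23 + c31_2) = a23 ^+ 2
    & - Sg * (c12_3 + b23_1 - c31) = a31 ^+ 2] /\
  [/\ - Sg * - a31_2 = a12 * a23, - Sg * - a23_1 = a12 * a31
    & - Sg * - a12_3 = a23 * a31] ->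
  a12_3 = a23 * a31 / Sg /\ a23_1 = a31 * a12 / Sg /\ a31_2 = a12 * a23 / Sg /\
  b12_3 = c23 * b31 / Sg /\ b23_1 = c31 * b12 / Sg /\ b31_2 = c12 * b23 / Sg /\
  c12_3 = b23 * c31 / Sg /\ c23_1 = b31 * c12 / Sg /\ c31_2 = b12 * c23 / Sg.
Proof.
move=> bc12_3 bc23_1 bc31_2 [[m11 m22 m33] [m12 m13 m23]].
have a12_3E : a12_3 * Sg = a23 * a31 by rewrite -m23; ring.
have a23_1E : a23_1 * Sg = a12 * a31 by rewrite -m13; ring.
have a31_2E : a31_2 * Sg = a12 * a23 by rewrite -m12; ring.
have sum1 : c23_1 * Sg + b31_2 * Sg = c12 * (b23 + b31).
  transitivity (c12 * Sg - b12 * c12); last by ring.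
  by rewrite bc12 -m11; ring.
have sum3 : b23_1 * Sg + c12_3 * Sg = c31 * (b12 + b23).
  transitivity (c31 * Sg - b31 * c31); last by ring.
  by rewrite bc31 -m33; ring.
have sum2 : b12_3 * Sg + c31_2 * Sg = c23 * (b12 + b31).
  transitivity (c23 * Sg - b23 * c23); last by ring.
  by rewrite bc23 -m22; ring.
have prod31 : b23_1 * Sg * (c23_1 * Sg) = b12 * c12 * (b31 * c31).
  transitivity (b23_1 * c23_1 * Sg ^+ 2); first by ring.
  by rewrite bc23_1 -exprMn a23_1E exprMn bc12 bc31.
have prod12 : b31_2 * Sg * (c31_2 * Sg) = b12 * c12 * (b23 * c23).
  transitivity (b31_2 * c31_2 * Sg ^+ 2); first by ring.
  by rewrite bc31_2 -exprMn a31_2E exprMn bc12 bc23.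
have prod23 : b12_3 * Sg * (c12_3 * Sg) = b23 * c23 * (b31 * c31).
  transitivity (b12_3 * c12_3 * Sg ^+ 2); first by ring.
  by rewrite bc12_3 -exprMn a12_3E exprMn bc23 bc31.
have [[pE qE] [rE sE] [wE vE]] :=
  sum_product_system_solution nz_b12 nz_b23 nz_b31 nz_Sg nz_c12 nz_c23 nz_c31
    sum1 sum3 sum2 prod31 prod12 prod23.
by repeat split; apply: (mulIf nz_Sg); rewrite divfK //
  ?a12_3E ?a23_1E ?a31_2E ?pE ?qE ?rE ?sE ?vE ?wE; ring.
Qed.

Lemma corner_minors_of_consistency :
  a12_3 = a23 * a31 / Sg /\ a23_1 = a31 * a12 / Sg /\ a31_2 = a12 * a23 / Sg /\
  b12_3 = c23 * b31 / Sg /\ b23_1 = c31 * b12 / Sg /\ b31_2 = c12 * b23 / Sg /\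
  c12_3 = b23 * c31 / Sg /\ c23_1 = b31 * c12 / Sg /\ c31_2 = b12 * c23 / Sg ->
  [/\ - Sg * (- c12 + c23_1 + b31_2) = a12 ^+ 2,
      - Sg * (b12_3 - c23 + c31_2) = a23 ^+ 2
    & - Sg * (c12_3 + b23_1 - c31) = a31 ^+ 2] /\
  [/\ - Sg * - a31_2 = a12 * a23, - Sg * - a23_1 = a12 * a31
    & - Sg * - a12_3 = a23 * a31].
Proof.
move=> [-> [-> [-> [-> [-> [-> [-> [-> ->]]]]]]]].
by split; split; rewrite -?bc12 -?bc23 -?bc31; field.
Qed.

End CornerConsistency.

Theorem theorem11 (R : realType)
  (a12 a23 a31 b12 b23 b31 c12 c23 c31 : R[i])
  (a12_3 a23_1 a31_2 b12_3 b23_1 b31_2 c12_3 c23_1 c31_2 : R[i]) :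
  a12 != 0 -> a23 != 0 -> a31 != 0 -> b12 != 0 -> b23 != 0 -> b31 != 0 ->
  c12 != 0 -> c23 != 0 -> c31 != 0 ->
  a12_3 != 0 -> a23_1 != 0 -> a31_2 != 0 -> b12_3 != 0 -> b23_1 != 0 ->
  b31_2 != 0 -> c12_3 != 0 -> c23_1 != 0 -> c31_2 != 0 ->
  b12 * c12 = a12 ^+ 2 -> b23 * c23 = a23 ^+ 2 -> b31 * c31 = a31 ^+ 2 ->
  b12_3 * c12_3 = a12_3 ^+ 2 -> b23_1 * c23_1 = a23_1 ^+ 2 ->
  b31_2 * c31_2 = a31_2 ^+ 2 ->
  b12 + b23 + b31 != 0 ->
  let Sg := b12 + b23 + b31 in
  \rank (corner_matrix
           (S123 a12 a23 a31 b12 b23 b31 c12 c23 c31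
                 a12_3 a23_1 a31_2 b12_3 b23_1 b31_2 c12_3 c23_1 c31_2)) = 1%N
  <->
  (a12_3 = a23 * a31 / Sg /\ a23_1 = a31 * a12 / Sg /\ a31_2 = a12 * a23 / Sg /\
   b12_3 = c23 * b31 / Sg /\ b23_1 = c31 * b12 / Sg /\ b31_2 = c12 * b23 / Sg /\
   c12_3 = b23 * c31 / Sg /\ c23_1 = b31 * c12 / Sg /\ c31_2 = b12 * c23 / Sg).
Proof.
move=> _ _ _ nz_b12 nz_b23 nz_b31 nz_c12 nz_c23 nz_c31 _ _ _ _ _ _ _ _ _
  bc12 bc23 bc31 bc12_3 bc23_1 bc31_2 nz_Sg Sg.
have two_neq0 : (2 : R[i]) != 0 by rewrite pnatr_eq0.
rewrite corner_matrix_S123 // mxrank_symmx4_eq1P ?oppr_eq0 //.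
split; first exact: consistency_of_corner_minors.
exact: corner_minors_of_consistency.
Qed.
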